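(* Let $a<b$ and let $X$ be a random variable taking values in $[a,b]$, with probability density function $f:[a,b]\rightarrow[0,1]$ and cumulative distribution function $F(x)=\Pr(X\le x)=\int_a^x f(t)\,dt$. Assume that $F$ is absolutely continuous with $F'=f\in L^2[a,b]$, and let $\sigma(f)=\|f\|_2^2-\frac{1}{b-a}$. Then for all $x\in[a,\frac{a+b}{2}]$, \[ \left|\frac{1}{2}[F(x)+F(a+b-x)]-\frac{b-E(X)}{b-a}\right|\leq (b-a)^{-1/2} \left[\frac{(b-a)^2}{48}+\left(x-\frac{3a+b}{4}\right)^2\right]^{1/2}\sqrt{\sigma(f)}, \] where $E(X)$ is the expectation of $X$.
   Context: $\|g\|_2=\left(\int_a^b g(t)^2\,dt\right)^{1/2}$. *)

From HB Require Import structures.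
From mathcomp Require Import all_boot all_order all_algebra.
From mathcomp Require Import all_classical all_reals all_analysis.
Set Implicit Arguments. Unset Strict Implicit. Unset Printing Implicit Defensive.
Import Order.TTheory GRing.Theory Num.Theory.
Import numFieldNormedType.Exports.
Local Open Scope classical_set_scope.
Local Open Scope ring_scope.

Definition dens_cdf {R : realType} (a : R) (f : R -> R) (x : R) : R :=
  Rintegral (@lebesgue_measure R) `[a, x] f.

Definition expect_dens {R : realType} (a b : R) (f : R -> R) : R :=
  Rintegral (@lebesgue_measure R) `[a, b] (fun t => t * f t).

Definition L2norm2 {R : realType} (a b : R) (f : R -> R) : R :=
  Rintegral (@lebesgue_measure R) `[a, b] (fun t => f t ^+ 2).

Definition sigma_f {R : realType} (a b : R) (f : R -> R) : R :=
  L2norm2 a b f - (b - a)^-1.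

(** For every slope [l], the squared L^2[a, b] distance from [f] to a suitable
    function that is affine of slope [l / (b - a)] on each of [[a, x]],
    [[x, a + b - x]] and [[a + b - x, b]] expands, using [int f = 1], into the
    quadratic [sigma(f) - 2 l D + l^2 K / (b - a)], where [D] is the quantity
    bounded in the theorem and [K = (b - a)^2 / 48 + (x - (3a + b) / 4)^2]. A quadratic in
    [l] that is everywhere nonnegative has nonpositive discriminant, whence
    [D^2 <= sigma(f) K / (b - a)]. *)

From HB Require Import structures.
From mathcomp Require Import all_boot all_order all_algebra.
From mathcomp Require Import all_classical all_reals all_analysis.
From mathcomp Require Import ring lra.
Import Order.TTheory GRing.Theory Num.Theory.
Import numFieldNormedType.Exports.
Local Open Scope classical_set_scope.
Local Open Scope ring_scope.

Section Rintegral_itv.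
Local Set Implicit Arguments. Local Unset Strict Implicit.
Context {R : realType}.
Local Notation mu := (@lebesgue_measure R).

Lemma integrable_mulid (a b : R) (g : R -> R) :
  mu.-integrable `[a, b] (EFin \o g) ->
  mu.-integrable `[a, b] (EFin \o (fun t => t * g t)).
Proof.
move=> ig; have := @integrableMr _ _ _ mu _ _ id _ _ _ ig; apply => //.
exact: (@compact_bounded R R^o _ (@segment_compact R a b)).
Qed.

Lemma Rintegral_itv_split (p q r : R) (g : R -> R) : p <= q -> q <= r ->
  mu.-integrable `[p, r] (EFin \o g) ->
  \int[mu]_(t in `[p, r]) g t =
  \int[mu]_(t in `[p, q]) g t + \int[mu]_(t in `[q, r]) g t.
Proof.
move=> pq qr ig.
have := @Rintegral_itvB _ g (BLeft p) (BRight r) q ig.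
rewrite !bnd_simp => /(_ pq qr).
rewrite Rintegral_itv_obnd_cbnd; last first.
  by apply: integrableS ig => //; apply: subset_itvr; rewrite bnd_simp.
by move=> <-; rewrite addrC subrK.
Qed.

Lemma Rintegral_itv_split3 (p q r s : R) (g : R -> R) :
  p <= q -> q <= r -> r <= s -> mu.-integrable `[p, s] (EFin \o g) ->
  \int[mu]_(t in `[p, s]) g t = \int[mu]_(t in `[p, q]) g t
    + \int[mu]_(t in `[q, r]) g t + \int[mu]_(t in `[r, s]) g t.
Proof.
move=> pq qr rs ig.
rewrite (Rintegral_itv_split pq (le_trans qr rs) ig) (Rintegral_itv_split qr rs).
  by rewrite addrA.
by apply: integrableS ig => //; apply: subset_itvr; rewrite bnd_simp.
Qed.

Lemma Rintegral_horner_deriv (P : {poly R}) (p q : R) : p <= q ->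
  \int[mu]_(t in `[p, q]) (P^`()).[t] = P.[q] - P.[p].
Proof.
rewrite le_eqVlt => /predU1P[<-|pq].
  by rewrite set_itv1 Rintegral_set1 subrr.
rewrite /Rintegral (@continuous_FTC2 _ _ (horner P)) //.
- by apply: continuous_in_subspaceT => t _; exact: continuous_horner.
- split.
  + by move=> t _; exact: derivable_horner.
  + by apply: cvg_at_right_filter; exact: continuous_horner.
  + by apply: cvg_at_left_filter; exact: continuous_horner.
- by move=> t _; rewrite -derivE.
Qed.

Lemma Rintegral_sqr_affine (A B p q : R) : p <= q ->
  \int[mu]_(t in `[p, q]) ((A + B * t) ^+ 2) =
  A ^+ 2 * (q - p) + A * B * (q ^+ 2 - p ^+ 2) + B ^+ 2 * (q ^+ 3 - p ^+ 3) / 3.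
Proof.
pose P : {poly R} := A ^+ 2 *: 'X + (A * B) *: 'X^2 + (B ^+ 2 / 3) *: 'X^3.
move=> pq; transitivity (\int[mu]_(t in `[p, q]) (P^`()).[t]).
  apply: eq_Rintegral => t _.
  by rewrite /P !derivD !derivZ derivX !derivXn !hornerE /=; field.
by rewrite Rintegral_horner_deriv // /P !(hornerD, hornerZ, hornerXn, hornerX); field.
Qed.

Lemma integrable_sqr_affine (A B p q : R) :
  mu.-integrable `[p, q] (EFin \o (fun t => (A + B * t) ^+ 2)).
Proof.
have -> : (fun t => (A + B * t) ^+ 2) = horner ((A%:P + B *: 'X) ^+ 2).
  by apply/funext => t; rewrite horner_exp !hornerE.
apply: continuous_compact_integrable; first exact: segment_compact.
by apply: continuous_in_subspaceT => t _; exact: continuous_horner.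
Qed.

End Rintegral_itv.

Section affine_deviation.
Local Set Implicit Arguments. Local Unset Strict Implicit.
Context {R : realType}.
Local Notation mu := (@lebesgue_measure R).
Variables (a b : R) (f : R -> R).
Hypothesis f_int : mu.-integrable `[a, b] (EFin \o f).
Hypothesis f2_int : mu.-integrable `[a, b] (EFin \o (fun t => f t ^+ 2)).

Lemma Rintegral_sqr_sub_affine (p q A B : R) : a <= p -> p <= q -> q <= b ->
  \int[mu]_(t in `[p, q]) ((f t - (A + B * t)) ^+ 2) =
  \int[mu]_(t in `[p, q]) (f t ^+ 2) - 2 * A * \int[mu]_(t in `[p, q]) f t
  - 2 * B * \int[mu]_(t in `[p, q]) (t * f t)
  + (A ^+ 2 * (q - p) + A * B * (q ^+ 2 - p ^+ 2) + B ^+ 2 * (q ^+ 3 - p ^+ 3) / 3).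
Proof.
move=> ap pq qb.
have sub : `[p, q] `<=` `[a, b] by apply: subset_itv; rewrite bnd_simp.
have i1 : mu.-integrable `[p, q] (EFin \o f) by apply: integrableS f_int.
have i2 : mu.-integrable `[p, q] (EFin \o (fun t => f t ^+ 2)).
  by apply: integrableS f2_int.
have i3 : mu.-integrable `[p, q] (EFin \o (fun t => t * f t)).
  by apply: integrableS (integrable_mulid f_int).
have iA : mu.-integrable `[p, q] (EFin \o (fun t => 2 * A * f t)).
  by have := integrableZl _ (2 * A) i1; apply.
have iB : mu.-integrable `[p, q] (EFin \o (fun t => 2 * B * (t * f t))).
  by have := integrableZl _ (2 * B) i3; apply.
have iAB : mu.-integrable `[p, q]
    (EFin \o (fun t => 2 * A * f t + 2 * B * (t * f t))).
  by have := integrableD _ iA iB; apply.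
have iL : mu.-integrable `[p, q]
    (EFin \o (fun t => f t ^+ 2 - (2 * A * f t + 2 * B * (t * f t)))).
  by have := integrableB _ i2 iAB; apply.
transitivity (\int[mu]_(t in `[p, q])
    (f t ^+ 2 - (2 * A * f t + 2 * B * (t * f t)) + (A + B * t) ^+ 2)).
  by apply: eq_Rintegral => t _; ring.
rewrite RintegralD ?integrable_sqr_affine // RintegralB // RintegralD //.
rewrite !RintegralZl // Rintegral_sqr_affine //.
by ring.
Qed.

End affine_deviation.

Section quadratic_discriminant.
Local Set Implicit Arguments. Local Unset Strict Implicit.

Lemma sqr_le_of_quadratic_ge0 (R : realFieldType) (S I K : R) : 0 < K ->
  (forall l, 0 <= S - 2 * l * I + l ^+ 2 * K) -> I ^+ 2 <= S * K.
Proof.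
move=> K0 /(_ (I / K)).
have -> : S - 2 * (I / K) * I + (I / K) ^+ 2 * K = S - I ^+ 2 / K.
  by field; rewrite gt_eqF.
by rewrite subr_ge0 ler_pdivrMr.
Qed.

Lemma normr_le_sqrtM3 (R : rcfType) (x y z u : R) : 0 <= x -> 0 <= y ->
  u ^+ 2 <= x * y * z -> `|u| <= Num.sqrt x * Num.sqrt y * Num.sqrt z.
Proof.
move=> x0 y0 u2; rewrite -!sqrtrM ?mulr_ge0 // -sqrtr_sqr.
exact: ler_wsqrtr.
Qed.

End quadratic_discriminant.

Section symmetric_cdf.
Local Set Implicit Arguments. Local Unset Strict Implicit.
Context {R : realType}.
Local Notation mu := (@lebesgue_measure R).
Variables (a b : R) (f : R -> R).
Hypothesis ab : a < b.
Hypothesis f_int : mu.-integrable `[a, b] (EFin \o f).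
Hypothesis f2_int : mu.-integrable `[a, b] (EFin \o (fun t => f t ^+ 2)).
Hypothesis f_total : \int[mu]_(t in `[a, b]) f t = 1.

Lemma symmetric_cdf_quadratic_ge0 (x l : R) : a <= x <= (a + b) / 2 ->
  0 <= sigma_f a b f
       - 2 * l * ((dens_cdf a f x + dens_cdf a f (a + b - x)) / 2
                  - (b - expect_dens a b f) / (b - a))
       + l ^+ 2 * (((b - a) ^+ 2 / 48 + (x - (3 * a + b) / 4) ^+ 2) / (b - a)).
Proof.
move=> /andP[ax xm]; set L := b - a; set y := a + b - x.
have xy : x <= y by rewrite /y; move: xm; rewrite ler_pdivlMr //; lra.
have yb : y <= b by rewrite /y; lra.
have xb : x <= b by lra.
have ay : a <= y by lra.
have split3 := Rintegral_itv_split3 ax xy yb.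
have FyE : dens_cdf a f y = dens_cdf a f x + \int[mu]_(t in `[x, y]) f t.
  rewrite /dens_cdf (Rintegral_itv_split ax xy) //.
  by apply: integrableS f_int => //; apply: subset_itv; rewrite bnd_simp.
(* [f] is compared on [[a, x]], [[x, y]], [[y, b]] with the affine functions
   [(1 + l (t - c)) / L], where [c] is [a], [(a + b) / 2], [b] respectively. *)
have dev_ge0 p q c : a <= p -> p <= q -> q <= b ->
    0 <= \int[mu]_(t in `[p, q]) ((f t - (1 / L - l * c / L + l / L * t)) ^+ 2).
  by move=> *; apply: Rintegral_ge0 => t _; exact: sqr_ge0.
have P1 := dev_ge0 _ _ a (lexx a) ax xb.
have P2 := dev_ge0 _ _ ((a + b) / 2) ax xy yb.
have P3 := dev_ge0 _ _ b ay yb (lexx b).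
rewrite !(Rintegral_sqr_sub_affine f_int f2_int) // in P1 P2 P3.
have fE := split3 _ f_int; rewrite f_total in fE.
rewrite /sigma_f /L2norm2 /expect_dens FyE /dens_cdf.
rewrite (split3 _ f2_int) (split3 _ (integrable_mulid f_int)).
set X1 := \int[mu]_(t in `[a, x]) f t in fE P1 P2 P3 *.
set X2 := \int[mu]_(t in `[x, y]) f t in fE P1 P2 P3 *.
set X3 := \int[mu]_(t in `[y, b]) f t in fE P1 P2 P3 *.
have X3E : X3 = 1 - X1 - X2 by lra.
rewrite X3E in P3.
apply: le_trans (addr_ge0 (addr_ge0 P1 P2) P3) _.
rewrite le_eqVlt; apply/orP; left; apply/eqP.
rewrite /L /y; field.
by rewrite subr_eq0 gt_eqF.
Qed.
End symmetric_cdf.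

Theorem theorem4p3 (R : realType) (a b : R) (f : R -> R) :
  a < b ->
  measurable_fun `[a, b] f ->
  (forall t, a <= t <= b -> 0 <= f t <= 1) ->
  (@lebesgue_measure R).-integrable `[a, b] (EFin \o f) ->
  Rintegral (@lebesgue_measure R) `[a, b] f = 1 ->
  (@lebesgue_measure R).-integrable `[a, b] (fun t => (f t ^+ 2)%:E) ->
  forall x, a <= x <= (a + b) / 2 ->
    `| (dens_cdf a f x + dens_cdf a f (a + b - x)) / 2 - (b - expect_dens a b f) / (b - a) |
    <= (Num.sqrt (b - a))^-1
       * Num.sqrt ((b - a) ^+ 2 / 48 + (x - (3 * a + b) / 4) ^+ 2)
       * Num.sqrt (sigma_f a b f).
Proof.
move=> ab _ _ f_int f_total f2_int x xI.
have L0 : 0 < b - a by rewrite subr_gt0.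
have K0 : 0 < (b - a) ^+ 2 / 48 + (x - (3 * a + b) / 4) ^+ 2.
  by rewrite ltr_pwDl ?sqr_ge0 // divr_gt0 // exprn_gt0.
have := sqr_le_of_quadratic_ge0 (divr_gt0 K0 L0)
  (fun l => symmetric_cdf_quadratic_ge0 ab f_int f2_int f_total l xI).
rewrite -sqrtrV ?(ltW L0) // => gap2.
apply: normr_le_sqrtM3; rewrite ?invr_ge0 ?(ltW L0) ?(ltW K0) //.
by rewrite [leRHS]mulrC (mulrC _^-1).
Qed.
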